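(* Let $f:\mathbb{R}^n\to\mathbb{R}^n$ be locally Lipschitz, and let $V_1,V_2\in C^1(\mathbb{R}^n)$, continuous $N_1,N_2:\mathbb{R}^n\to[0,\infty)$, and continuous $h:[0,\infty)\to[0,\infty)$ with $h(0)=0$ and $\sup_{r>0}h(r)/r<\infty$ satisfy $\nabla V_1\cdot f\le -N_1$ and $\nabla V_2\cdot f\le -N_2+h(N_1)$ on $\mathbb{R}^n$. Assume every solution of $\dot x=f(x)$ is defined and bounded on $[0,\infty)$ and that along every solution the maps $t\mapsto N_i(x(t))$ are uniformly continuous on $[0,\infty)$. Let $E:=\{x\in\mathbb{R}^n:N_1(x)=0,\ N_2(x)=0\}$. If every point of $E$ is Lyapunov stable, then every solution converges as $t\to\infty$ to a point of $E$, and $E$ is pointwise asymptotically stable.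
   Context: A point $z$ is Lyapunov stable for $\dot x=f(x)$ if for every neighborhood $U$ of $z$ there is a neighborhood $V\subset U$ of $z$ such that every solution starting in $V$ remains in $U$ for all $t\ge0$. A set $Z$ is pointwise asymptotically stable (PAS) if (A1) every $z\in Z$ is Lyapunov stable and (A2) solutions starting sufficiently near $Z$ converge, with $\lim_{t\to\infty}x(t)\in Z$. *)

From HB Require Import structures.
From mathcomp Require Import all_boot all_order all_algebra.
From mathcomp Require Import all_classical all_reals all_analysis.
Set Implicit Arguments. Unset Strict Implicit. Unset Printing Implicit Defensive.
Import Order.TTheory GRing.Theory Num.Theory.
Import numFieldNormedType.Exports.
Local Open Scope classical_set_scope.
Local Open Scope ring_scope.

Section Defs.
Context {R : realType} {n : nat}.
Notation V := 'rV[R]_n.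

Definition locally_lipschitz (f : V -> V) : Prop :=
  forall x : V, exists r : R, exists L : R, 0 < r /\
    forall y z : V, ball x r y -> ball x r z -> `|f y - f z| <= L * `|y - z|.

(* V is C^1: differentiable everywhere with continuous derivative
   (continuity of every directional derivative x |-> 'd W x v) *)
Definition C1 (W : V -> R) : Prop :=
  (forall x, differentiable W x) /\
  (forall v : V, continuous (fun x => 'd W x v)).

Definition is_sol (f : V -> V) (x : R -> V) : Prop :=
  x t @[t --> (0:R)^'+] --> x 0 /\
  forall t : R, 0 < t -> is_derive t (1:R) x (f (x t)).

Definition bounded_on_pos (x : R -> V) : Prop :=
  exists M : R, forall t, 0 <= t -> `|x t| <= M.

Definition unif_cont_on_pos (g : R -> R) : Prop :=
  forall e : R, 0 < e -> exists d : R, 0 < d /\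
    forall s t, 0 <= s -> 0 <= t -> `|s - t| < d -> `|g s - g t| < e.

Definition lyapunov_stable (f : V -> V) (z : V) : Prop :=
  forall U : set V, nbhs z U -> exists W : set V, nbhs z W /\ W `<=` U /\
    forall x, is_sol f x -> W (x 0) -> forall t, 0 <= t -> U (x t).

Definition PAS (f : V -> V) (Z : set V) : Prop :=
  (forall z, Z z -> lyapunov_stable f z) /\
  (exists W : set V, (forall z, Z z -> nbhs z W) /\
     forall x, is_sol f x -> W (x 0) ->
       exists p, Z p /\ x t @[t --> +oo%R] --> p).

End Defs.

From HB Require Import structures.
From mathcomp Require Import all_boot all_order all_algebra.
From mathcomp Require Import all_classical all_reals all_analysis.
From mathcomp Require Import lra.
Import Order.TTheory GRing.Theory Num.Theory.
Import numFieldNormedType.Exports.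
Local Open Scope classical_set_scope.
Local Open Scope ring_scope.

(* Along a bounded solution, V1 and W := V2 + k V1, where h r <= k r, are
   bounded below and have derivatives at most -N1 and -N2.  A Barbalat-type
   argument then drives N1 (x t) and N2 (x t) to 0: whenever N (x t) >= e,
   uniform continuity keeps N >= e/2 on a window of fixed length, which costs
   the Lyapunov function a fixed amount, so this can only happen finitely
   often.  Boundedness provides an omega-limit point p, which lies in E by
   continuity; as p is Lyapunov stable and the solution passes arbitrarily
   close to p at arbitrarily late times, it converges to p.  Since every
   solution converges, E is attractive from the whole space. *)

Lemma is_derive_diff_comp {R : realType} {U Y : normedModType R}
    (W : U -> Y) (x : R -> U) (t : R) (v : U) :
  differentiable W (x t) -> is_derive t 1 x v ->
  is_derive t 1 (W \o x) ('d W (x t) v).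
Proof.
move=> dW dx.
have dxt : differentiable x t by apply/derivable1_diffP; exact: ex_derive.
apply: DeriveDef; first by apply/derivable1_diffP; exact: differentiable_comp.
rewrite deriveE; last exact: differentiable_comp.
by rewrite diff_comp //= -(deriveE _ dxt) derive_val.
Qed.

Section ScalarDescent.
Context {R : realType}.

Lemma is_derive_le0_le (g dg : R -> R) (a b : R) : a <= b ->
  (forall t, a <= t <= b -> is_derive t 1 g (dg t)) ->
  (forall t, a < t < b -> dg t <= 0) -> g b <= g a.
Proof.
rewrite le_eqVlt => /orP[/eqP -> //|ab] dg_g dg_le0.
have [c /[!in_itv] /= /andP[ac cb] gba] : exists2 c, c \in `]a, b[ &
    g b - g a = dg c * (b - a).
  apply: MVT => // [t /[!in_itv] /= /andP[lt_at lt_tb]|].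
    by apply: dg_g; rewrite !ltW.
  apply: derivable_within_continuous => t /[!in_itv] /= tab.
  by case: (dg_g t tab).
by have := dg_le0 c ltac:(lra); nra.
Qed.

Variables (g dg N : R -> R).
Hypothesis g_deriv : forall t : R, 0 < t -> is_derive t 1 g (dg t).
Hypothesis dg_le : forall t : R, 0 < t -> dg t <= - N t.

Lemma descent_window (t d e : R) : 0 < t -> 0 <= d ->
  (forall s, t < s < t + d -> e <= N s) -> g (t + d) <= g t - e * d.
Proof.
move=> t0 d0 eN.
suff : g (t + d) + e * (t + d) <= g t + e * t by lra.
apply: (@is_derive_le0_le (g + e \*: id) (fun s => dg s + e *: 1)).
- by rewrite lerDl.
- by move=> s /andP[ts _]; apply: is_deriveD; apply: g_deriv; lra.
- move=> s /andP[ts sd]; rewrite [e%:A]mulr1.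
  by have := dg_le s ltac:(lra); have := eN s ltac:(lra); lra.
Qed.

Lemma barbalat : (forall t : R, 0 <= t -> 0 <= N t) -> unif_cont_on_pos N ->
  (exists B, forall t : R, 0 < t -> B <= g t) -> N t @[t --> +oo] --> 0.
Proof.
move=> N_ge0 ucN [B gB]; apply/cvgrPdist_lt => e e0.
have [d [d0 Nd]] := ucN (e / 2) ltac:(lra).
pose c := e / 2 * d; have c0 : 0 < c by rewrite /c; nra.
have drop t : 0 < t -> e <= N t -> g (t + d) <= g t - c.
  move=> t0 et; apply: (@descent_window t d (e / 2)); [done | lra |].
  move=> s /andP[ts sd].
  have := Nd s t ltac:(lra) ltac:(lra) ltac:(rewrite ger0_norm; lra).
  by rewrite ltr_norml; lra.
have nincr s t : 0 < s -> s <= t -> g t <= g s.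
  move=> s0 st; have := @descent_window s (t - s) 0 s0 ltac:(lra).
  by rewrite subrKC mul0r subr0; apply=> u /andP[su _]; apply: N_ge0; lra.
suff [T NT] : exists T, forall t, T <= t -> N t < e.
  near=> t; have : Num.max T 0 <= t.
    by near: t; apply: nbhs_pinfty_ge; exact: num_real.
  by rewrite ge_max sub0r normrN => /andP[/NT Nt /N_ge0 /ger0_norm ->].
apply: contrapT => /forallNP noT.
have recur T : exists t, T <= t /\ e <= N t.
  have /existsNP[t /not_implyP[Tt /negP]] := noT T.
  by rewrite -leNgt; exists t.
have far (k : nat) : exists t, 1 <= t /\ g t <= g 1 - k%:R * c.
  elim: k => [|k [t [t1 gt]]]; first by exists 1; rewrite mul0r subr0.
  have [s [ts es]] := recur t.
  exists (s + d); split; first lra.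
  have := drop s ltac:(lra) es; have := nincr t s ltac:(lra) ts.
  by rewrite -natr1 mulrDl mul1r; lra.
have [k kc] : exists k : nat, (g 1 - B) / c < k%:R.
  by exists (Num.truncn ((g 1 - B) / c)).+1; exact: truncnS_gt.
have [t [t1 gt]] := far k.
move: kc; rewrite ltr_pdivrMr // => kc.
by have := gB t ltac:(lra); lra.
Unshelve. all: by end_near.
Qed.
End ScalarDescent.

Section Trajectories.
Context {R : realType} {n : nat}.
Notation V := 'rV[R]_n.
Implicit Types (f : V -> V) (x : R -> V) (p : V).

Lemma is_sol_shift {f x} {s : R} : 0 < s -> is_sol f x ->
  is_sol f (fun t => x (t + s)).
Proof.
move=> s0 [_ dx]; split.
  have xs : {for s, continuous x}.
    apply: differentiable_continuous; apply/derivable1_diffP.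
    by case: (dx s s0).
  rewrite add0r; apply: cvg_at_right_filter; apply: continuous_cvg => //.
  by rewrite -[X in _ --> X]add0r; apply: cvgD; [exact: cvg_id | exact: cvg_cst].
move=> t t0; have [dxts <-] := dx (t + s) (addr_gt0 t0 s0).
have shiftE : (fun h : R => h^-1 *: (((fun u => x (u + s)) \o shift t) (h *: 1)
    - x (t + s))) = (fun h : R => h^-1 *: ((x \o shift (t + s)) (h *: 1) - x (t + s))).
  by apply: funext => h /=; rewrite addrA.
by apply: DeriveDef; move: dxts; rewrite /derivable /derive shiftE.
Qed.

Lemma compact_norm_le (M : R) : compact [set v : V | `|v| <= M].
Proof.
apply: bounded_closed_compact.
  apply: filterS (nbhs_pinfty_ge (num_real M)) => M' MM' v /= vM.
  exact: le_trans MM'.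
have -> : [set v : V | `|v| <= M] = Num.norm @^-1` [set r | r <= M] by [].
by apply: preimage_closed (@closed_le _ M) => v _; exact: norm_continuous.
Qed.

Lemma bounded_on_pos_cluster {x} : bounded_on_pos x ->
  exists p, cluster (x t @[t --> +oo]) p.
Proof.
move=> [M xM]; have [|p [_ clp]] := compact_norm_le M (x t @[t --> +oo]) _.
  by exists 0; split=> [|t t0]; [exact: num_real | apply: xM; exact: ltW].
by exists p.
Qed.

Lemma cluster_pinfty_visits {x p} {B : set V} (T : R) :
  cluster (x t @[t --> +oo]) p -> nbhs p B -> exists2 t, T < t & B (x t).
Proof.
move=> clp pB; have [|_ [[t Tt <-] Bxt]] := clp (x @` [set t | T < t]) B _ pB.
  by exists T; split=> [|t Tt]; [exact: num_real | exists t].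
by exists t.
Qed.

Lemma bounded_on_pos_lower_bound {W : V -> R} {x} : continuous W ->
  bounded_on_pos x -> exists B, forall t, 0 <= t -> B <= W (x t).
Proof.
move=> cW [M xM].
have /compact_bounded [B [_ WB]] : compact (W @` [set v : V | `|v| <= M]).
  apply: continuous_compact; last exact: compact_norm_le.
  exact: continuous_subspaceT.
exists (- (B + 1)) => t t0.
have : `|W (x t)| <= B + 1.
  by apply: WB; [rewrite ltrDl | exists (x t) => //; exact: xM].
by rewrite ler_norml => /andP[].
Qed.

Lemma cluster_cvg_eq {N : V -> R} {x p} {l : R} : continuous N ->
  N (x t) @[t --> +oo] --> l -> cluster (x t @[t --> +oo]) p -> N p = l.
Proof.
move=> cN /cvgrPdist_lt Nxl clp; apply: contrapT => /eqP Npl.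
have e0 : 0 < `|N p - l| / 2 by rewrite divr_gt0 // normr_gt0 subr_eq0.
have [T [_ TN]] := Nxl _ e0.
have /cvgrPdist_lt /(_ _ e0) Np := cN p.
have [t Tt /= Nt] := cluster_pinfty_visits T clp Np.
have := TN t Tt; have := ler_distD (N (x t)) (N p) l.
by rewrite [`|l - _|]distrC; lra.
Qed.

Lemma lyapunov_stable_cluster_cvg {f x p} : is_sol f x -> lyapunov_stable f p ->
  cluster (x t @[t --> +oo]) p -> x t @[t --> +oo] --> p.
Proof.
move=> xs stab_p clp; apply/cvgrPdist_lt => e e0.
have [W [pW [_ W_stays]]] := stab_p _ (nbhsx_ballx p e e0).
have [s s0 Wxs] := cluster_pinfty_visits 0 clp pW.
have /W_stays stays := is_sol_shift s0 xs; rewrite add0r in stays.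
near=> t; have /stays : 0 <= t - s.
  by rewrite subr_ge0; near: t; apply: nbhs_pinfty_ge; exact: num_real.
by rewrite subrK -ball_normE; apply.
Unshelve. all: by end_near.
Qed.

Lemma lyapunov_barbalat {f} {W N : V -> R} {x} :
  (forall y, differentiable W y) -> (forall y, 'd W y (f y) <= - N y) ->
  (forall y, 0 <= N y) -> is_sol f x -> bounded_on_pos x ->
  unif_cont_on_pos (N \o x) -> N (x t) @[t --> +oo] --> 0.
Proof.
move=> dW dWf N_ge0 [_ dx] xb ucN.
have cW : continuous W by move=> y; exact: differentiable_continuous.
have [B WB] := bounded_on_pos_lower_bound cW xb.
apply: (@barbalat _ (W \o x) (fun t => 'd W (x t) (f (x t)))) => //.
- by move=> t t0; apply: is_derive_diff_comp; [exact: dW | exact: dx].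
- by exists B => t t0; apply: WB; exact: ltW.
Qed.
End Trajectories.

Lemma ratio_bounded_le_linear {R : realFieldType} {h : R -> R} : h 0 = 0 ->
  (exists M, forall r, 0 < r -> h r / r <= M) ->
  exists2 k, 0 <= k & forall r, 0 <= r -> h r <= k * r.
Proof.
move=> h0 [M hM]; exists (Num.max M 0) => [|r].
  by rewrite le_max lexx orbT.
rewrite le_eqVlt => /orP[/eqP <-|r0]; first by rewrite h0 mulr0.
have := hM r r0; rewrite ler_pdivrMr // => /le_trans; apply.
by rewrite ler_pM2r // le_max lexx.
Qed.

Theorem corollary2p6 (R : realType) (n : nat) (f : 'rV[R]_n -> 'rV[R]_n)
  (V1 V2 N1 N2 : 'rV[R]_n -> R) (h : R -> R) :
  locally_lipschitz f ->
  C1 V1 -> C1 V2 ->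
  continuous N1 -> continuous N2 ->
  (forall x, 0 <= N1 x) -> (forall x, 0 <= N2 x) ->
  {within `[0, +oo[, continuous h} ->
  (forall r, 0 <= r -> 0 <= h r) -> h 0 = 0 ->
  (exists M : R, forall r, 0 < r -> h r / r <= M) ->
  (forall x, 'd V1 x (f x) <= - N1 x) ->
  (forall x, 'd V2 x (f x) <= - N2 x + h (N1 x)) ->
  (forall x0, exists x, is_sol f x /\ x 0 = x0) ->
  (forall x, is_sol f x -> bounded_on_pos x) ->
  (forall x, is_sol f x ->
     unif_cont_on_pos (fun t => N1 (x t)) /\ unif_cont_on_pos (fun t => N2 (x t))) ->
  let E := [set x | N1 x = 0 /\ N2 x = 0] in
  (forall z, E z -> lyapunov_stable f z) ->
  (forall x, is_sol f x -> exists p, E p /\ x t @[t --> +oo%R] --> p) /\ PAS f E.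
Proof.
(* The solution-level hypotheses (boundedness, uniform continuity) make
   Lipschitz continuity and existence of solutions unnecessary, and only the
   linear bound on h is used. *)
move=> _ [dV1 _] [dV2 _] cN1 cN2 N1_ge0 N2_ge0 _ _ h0 hM dV1f dV2f _ xb Nuc E stab.
have [k k0 hk] := ratio_bounded_le_linear h0 hM.
have dW y : differentiable (V2 + k *: V1) y.
  by apply: differentiableD; [exact: dV2 | apply: differentiableZ; exact: dV1].
have dWf y : 'd (V2 + k *: V1) y (f y) <= - N2 y.
  rewrite diffD //; last exact: differentiableZ.
  rewrite (diffZ k (dV1 y)) /= -[k *: _]/(k * _).
  by have := dV2f y; have := dV1f y; have := hk (N1 y) (N1_ge0 y); nra.
have sol_cvg x : is_sol f x -> exists p, E p /\ x t @[t --> +oo] --> p.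
  move=> xs; have [p clp] := bounded_on_pos_cluster (xb x xs).
  have [uc1 uc2] := Nuc x xs.
  have N1x := lyapunov_barbalat dV1 dV1f N1_ge0 xs (xb x xs) uc1.
  have N2x := lyapunov_barbalat dW dWf N2_ge0 xs (xb x xs) uc2.
  have Ep : E p by split; exact: cluster_cvg_eq clp.
  by exists p; split; last exact: lyapunov_stable_cluster_cvg (stab p Ep) clp.
split=> //; split=> //; exists setT.
by split=> [z _|x xs _]; [exact: filterT | exact: sol_cvg].
Qed.
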